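(* Let $F:\mathbb{R}^p\to\mathbb{R}^p$ be single-valued, let $\kappa_1,\kappa_2\ge0$, $\beta\in(0,1]$, $\eta>0$, and let $\{(x^k,y^k)\}$ be generated by: start from $x^0\in\mathrm{dom}\,F$, set $x^{-1}=y^{-1}:=x^0$, and for $k\ge0$ $$y^k:=x^k-\tfrac{\eta}{\beta}u^k,\qquad x^{k+1}:=x^k-\eta Fy^k,$$ where $u^k\in\mathbb{R}^p$ satisfies $\|Fx^k-u^k\|^2\le\kappa_1\|Fx^k-Fy^{k-1}\|^2+\kappa_2\|Fx^k-Fx^{k-1}\|^2$. Then for any $\gamma>0$, any $\hat x\in\mathrm{dom}\,F$ and any $k\ge0$, $$\begin{aligned}\|x^{k+1}-\hat x\|^2\le{}&\|x^k-\hat x\|^2-\beta\|y^k-x^k\|^2+\tfrac{\eta^2}{\gamma}\|Fy^k-u^k\|^2-2\eta\langle Fy^k,y^k-\hat x\rangle\\&-(\beta-\gamma)\|x^{k+1}-y^k\|^2-(1-\beta)\|x^{k+1}-x^k\|^2.\end{aligned}$$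
   Context: $\|\cdot\|$, $\langle\cdot,\cdot\rangle$ are the Euclidean norm and inner product. *)

From mathcomp Require Import all_boot all_order all_algebra.
From mathcomp Require Import reals.
Set Implicit Arguments. Unset Strict Implicit. Unset Printing Implicit Defensive.
Import Order.TTheory GRing.Theory Num.Theory.
Local Open Scope ring_scope.

Definition dotp (R : realType) (p : nat) (u v : 'rV[R]_p) : R :=
  \sum_(i < p) u ord0 i * v ord0 i.

Definition sqnorm (R : realType) (p : nat) (u : 'rV[R]_p) : R := dotp u u.

(* previous iterate with the convention  z^{-1} := x^0 *)
Definition prev_it (R : realType) (p : nat) (x0 : 'rV[R]_p) (z : nat -> 'rV[R]_p)
  (k : nat) : 'rV[R]_p :=
  if k is k'.+1 then z k' else x0.

From mathcomp Require Import all_boot all_order all_algebra.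
From mathcomp Require Import reals.
From mathcomp Require Import ring.
Import Order.TTheory GRing.Theory Num.Theory.
Local Open Scope ring_scope.

(* The inequality holds coordinatewise, and in each coordinate it is an
   identity up to a square: with x' := x - eta v and y := x - (eta/beta) w,
   right-hand side minus left-hand side equals
   (gamma (y - x') - eta (v - w))^2 / gamma. *)

Section ScalarStep.

Variable R : fieldType.
Variables (x xhat v w eta beta gamma : R).
Hypotheses (beta_neq0 : beta != 0) (gamma_neq0 : gamma != 0).

Let x' := x - eta * v.
Let y := x - eta / beta * w.

Lemma step_gap_square :
  (x - xhat) ^+ 2 - beta * (y - x) ^+ 2 + eta ^+ 2 / gamma * (v - w) ^+ 2
  - 2 * eta * (v * (y - xhat)) - (beta - gamma) * (x' - y) ^+ 2
  - (1 - beta) * (x' - x) ^+ 2 - (x' - xhat) ^+ 2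
  = (gamma * (y - x') - eta * (v - w)) ^+ 2 / gamma.
Proof. by rewrite /x' /y; field; apply/andP. Qed.

End ScalarStep.

Lemma step_ineq (R : realFieldType) (x x' y xhat v w eta beta gamma : R) :
  beta != 0 -> 0 < gamma ->
  x' = x - eta * v -> y = x - eta / beta * w ->
  (x' - xhat) * (x' - xhat) <=
    (x - xhat) * (x - xhat) - beta * ((y - x) * (y - x))
    + eta ^+ 2 / gamma * ((v - w) * (v - w))
    - 2 * eta * (v * (y - xhat))
    - (beta - gamma) * ((x' - y) * (x' - y))
    - (1 - beta) * ((x' - x) * (x' - x)).
Proof.
move=> beta_neq0 gamma_gt0 -> ->; rewrite -subr_ge0 -!expr2.
rewrite step_gap_square // ?lt0r_neq0 //.
by rewrite divr_ge0 ?sqr_ge0 ?ltW.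
Qed.

Theorem lemma1 (R : realType) (p : nat) (F : 'rV[R]_p -> 'rV[R]_p)
  (domF : 'rV[R]_p -> Prop) (kappa1 kappa2 beta eta : R)
  (x y u : nat -> 'rV[R]_p) :
  0 <= kappa1 -> 0 <= kappa2 -> 0 < beta -> beta <= 1 -> 0 < eta ->
  domF (x 0%N) ->
  (forall k : nat, y k = x k - (eta / beta) *: u k) ->
  (forall k : nat, x k.+1 = x k - eta *: F (y k)) ->
  (forall k : nat,
     sqnorm (F (x k) - u k) <=
       kappa1 * sqnorm (F (x k) - F (prev_it (x 0%N) y k))
     + kappa2 * sqnorm (F (x k) - F (prev_it (x 0%N) x k))) ->
  forall (gamma : R) (xhat : 'rV[R]_p) (k : nat),
    0 < gamma -> domF xhat ->
    sqnorm (x k.+1 - xhat) <=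
      sqnorm (x k - xhat) - beta * sqnorm (y k - x k)
      + eta ^+ 2 / gamma * sqnorm (F (y k) - u k)
      - 2 * eta * dotp (F (y k)) (y k - xhat)
      - (beta - gamma) * sqnorm (x k.+1 - y k)
      - (1 - beta) * sqnorm (x k.+1 - x k).
Proof.
move=> _ _ beta_gt0 _ _ _ y_def x_next _ gamma xhat k gamma_gt0 _.
rewrite /sqnorm /dotp !mulr_sumr -!sumrB -big_split /= -!sumrB.
apply: ler_sum => i _; rewrite !mxE.
apply: step_ineq => //; first exact: lt0r_neq0.
- by rewrite x_next !mxE.
- by rewrite y_def !mxE.
Qed.
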